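(* Let $\nu\ge2$ and $2\le n,m\le\nu$ be fixed integers and let $M\ge1$. Let $$P_1(Z)=\sum_{i=0}^{n-1}a_iZ^i\qquad\text{and}\qquad P_2(Z)=\sum_{i=0}^{m-1}b_iZ^i$$ be polynomials with complex coefficients such that $a_{n-1},b_{m-1}\ne0$ and $|a_i|,|b_i|<M^{\nu-i}$ for all $i=0,\ldots,\nu-1$ (for which these coefficients are defined). Then $$|\mathrm{Res}(P_1,P_2)|\ll M^{\nu^2-1},$$ where the implied constant depends only on $\nu$.
   Context: $\mathrm{Res}(P_1,P_2)$ denotes the resultant, i.e. the determinant of the $(n+m-2)\times(n+m-2)$ Sylvester matrix whose first $m-1$ rows are the shifted coefficient rows $(a_{n-1},\ldots,a_1,a_0)$ of $P_1$ and whose last $n-1$ rows are the shifted coefficient rows $(b_{m-1},\ldots,b_1,b_0)$ of $P_2$. *)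

From HB Require Import structures.
From mathcomp Require Import all_boot all_order all_algebra.
From mathcomp Require Import complex.
From mathcomp Require Import reals.
Set Implicit Arguments. Unset Strict Implicit. Unset Printing Implicit Defensive.

From HB Require Import structures.
From mathcomp Require Import all_boot all_order all_algebra.
From mathcomp Require Import complex.
From mathcomp Require Import reals.
From mathcomp Require Import perm zify.
Import Order.TTheory GRing.Theory Num.Theory.
Local Open Scope ring_scope.

(* Weight coefficient [a_k] by [c^k] and column [j] of the Sylvester matrix by
   [c^j]: the hypothesis [|a_k| < c^(nu-k)] bounds every weighted coefficient by
   [c^nu], hence the entry [a_(j-k)] of row [k] by [c^(nu+k)].  Each of the N!
   terms of the determinant is then bounded by the product of the row weights,
   and after cancelling the column weights the exponent left over is
   [nu(p+q) - pq <= nu^2 - 1], because [nu^2 - nu(p+q) + pq = (nu-p)(nu-q) >= 1]. *)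

Lemma norm_det_weighted_le {R : numDomainType} {N} {A : 'M[R]_N} {c : R}
    {w v : 'I_N -> nat} :
  1 <= c -> (forall i j, `|A i j| * c ^+ v j <= c ^+ w i) ->
  `|\det A| * c ^+ (\sum_j v j) <= N`!%:R * c ^+ (\sum_i w i).
Proof.
move=> c_ge1 entry_le; have c_ge0 : 0 <= c := le_trans ler01 c_ge1.
apply: le_trans (ler_wpM2r (exprn_ge0 _ c_ge0) (ler_norm_sum _ _ _)) _.
have -> : N`!%:R * c ^+ (\sum_i w i) = \sum_(s : 'S_N) c ^+ (\sum_i w i).
  by rewrite sumr_const card_Sn mulr_natl.
rewrite mulr_suml; apply: ler_sum => s _.
rewrite normrM normrX normrN normr1 expr1n mul1r normr_prod.
rewrite [X in _ * c ^+ X](reindex_inj (@perm_inj _ s)) /=.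
rewrite !(big_morph _ (exprD c) (expr0 c)) -big_split /=.
apply: ler_prod => i _; rewrite mulr_ge0 ?exprn_ge0 //=.
Qed.

Lemma norm_coef_poly_weighted_le {R : numDomainType} {c : R} {nu n}
    {a : nat -> R} :
  1 <= c -> (n <= nu)%N -> (forall i, (i < n)%N -> `|a i| <= c ^+ (nu - i)) ->
  forall k, `|(\poly_(i < n) a i)`_k| * c ^+ k <= c ^+ nu.
Proof.
move=> c_ge1 n_le a_le k; have c_ge0 : 0 <= c := le_trans ler01 c_ge1.
rewrite coef_poly; case: ltnP => [k_lt|_]; last by rewrite normr0 mul0r exprn_ge0.
apply: le_trans (ler_wpM2r (exprn_ge0 _ c_ge0) (a_le _ k_lt)) _.
by rewrite -exprD subnK // ltnW // (leq_trans k_lt).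
Qed.

Lemma norm_band_coef_weighted_le {R : numDomainType} {c : R} {nu}
    {p : {poly R}} (j k : nat) :
  1 <= c -> (forall i, `|p`_i| * c ^+ i <= c ^+ nu) ->
  `|p`_(j - k) *+ (k <= j)| * c ^+ j <= c ^+ (nu + k).
Proof.
move=> c_ge1 p_le; have c_ge0 : 0 <= c := le_trans ler01 c_ge1.
case: (leqP k j) => [k_le|_]; last by rewrite mulr0n normr0 mul0r exprn_ge0.
rewrite mulr1n -{2}(subnK k_le) !exprD mulrA.
by rewrite ler_wpM2r ?exprn_ge0.
Qed.

Lemma sum_ord_addn (a b : nat) :
  (\sum_(i < a + b) i = \sum_(i < a) i + \sum_(i < b) i + b * a)%N.
Proof. by rewrite big_split_ord /= big_split /= sum_nat_const card_ord; lia. Qed.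

Lemma norm_resultant_weighted_le {R : numDomainType} {c : R} {nu}
    {p q : {poly R}} :
  1 <= c -> (forall i, `|p`_i| * c ^+ i <= c ^+ nu) ->
  (forall i, `|q`_i| * c ^+ i <= c ^+ nu) ->
  `|resultant p q| * c ^+ ((size p).-1 * (size q).-1)
    <= ((size q).-1 + (size p).-1)`!%:R * c ^+ (nu * ((size q).-1 + (size p).-1)).
Proof.
move=> c_ge1 p_le q_le; have c_gt0 : 0 < c := lt_le_trans ltr01 c_ge1.
set dp := (size p).-1; set dq := (size q).-1.
pose w (i : 'I_(dq + dp)) :=
  (nu + match split i with inl k => nat_of_ord k | inr k => nat_of_ord k end)%N.
have entry_le i j : `|Sylvester_mx p q i j| * c ^+ j <= c ^+ w i.
  by rewrite Sylvester_mxE /w; case: split => k; apply: norm_band_coef_weighted_le.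
have := norm_det_weighted_le c_ge1 entry_le.
have -> : (\sum_i w i = nu * (dq + dp) + (\sum_(k < dq) k + \sum_(k < dp) k))%N.
  rewrite big_split_ord (eq_bigr (fun k : 'I_dq => nu + k)%N) => [|k _]; last first.
    by rewrite /w (unsplitK (inl k)).
  rewrite (eq_bigr (fun k : 'I_dp => nu + k)%N) => [|k _]; last first.
    by rewrite /w (unsplitK (inr k)).
  by rewrite !big_split /= !sum_nat_const !card_ord; lia.
have -> : (\sum_(j < dq + dp) j = dp * dq + (\sum_(k < dq) k + \sum_(k < dp) k))%N.
  by rewrite sum_ord_addn; lia.
by rewrite (exprD _ (dp * dq)) (exprD _ (nu * _)) !mulrA ler_pM2r ?exprn_gt0.
Qed.

Lemma sylvester_exponent_le (nu p q : nat) : (p < nu)%N -> (q < nu)%N ->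
  (nu * (q + p) <= nu ^ 2 - 1 + p * q)%N.
Proof. by move=> p_lt q_lt; nia. Qed.

Local Open Scope complex_scope.

Theorem corollary2p31 (nu : nat) (hnu : (2 <= nu)%N) :
  exists K : nat,
  forall (R : realType) (n m : nat) (M : R) (a b : nat -> R[i]),
    (2 <= n <= nu)%N -> (2 <= m <= nu)%N -> 1 <= M ->
    a n.-1 != 0 -> b m.-1 != 0 ->
    (forall i : nat, (i < n)%N -> `|a i| < (M ^+ (nu - i))%:C) ->
    (forall i : nat, (i < m)%N -> `|b i| < (M ^+ (nu - i))%:C) ->
    `|resultant (\poly_(i < n) a i) (\poly_(i < m) b i)|
      <= K%:R * (M ^+ (nu ^ 2 - 1))%:C.
Proof.
exists (nu + nu)`!.
move=> R n m M a b /andP[n_ge2 n_le] /andP[m_ge2 m_le] M_ge1 a_lead b_lead a_lt b_lt.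
set c : R[i] := M%:C; rewrite rmorphXn /= -/c.
have c_ge1 : 1 <= c by rewrite lecR.
have c_gt0 : 0 < c := lt_le_trans ltr01 c_ge1.
have a_le i : (i < n)%N -> `|a i| <= c ^+ (nu - i).
  by move=> /a_lt; rewrite rmorphXn => /ltW.
have b_le i : (i < m)%N -> `|b i| <= c ^+ (nu - i).
  by move=> /b_lt; rewrite rmorphXn => /ltW.
have := norm_resultant_weighted_le c_ge1
  (norm_coef_poly_weighted_le c_ge1 n_le a_le)
  (norm_coef_poly_weighted_le c_ge1 m_le b_le).
rewrite !size_poly_eq //= => res_le.
rewrite -(ler_pM2r (exprn_gt0 ((n.-1 * m.-1)%N) c_gt0)) -mulrA -exprD.
apply: le_trans res_le _; apply: ler_pM; rewrite ?ler0n ?exprn_ge0 ?(ltW c_gt0) //.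
  by rewrite ler_nat leq_fact //; lia.
by apply: ler_weXn2l => //; apply: sylvester_exponent_le; lia.
Qed.
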